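(* Let $G=([k],E)$ be a graph and let $(P_1,\dots,P_k)$ be a $k$-tuple of finite sets in $\mathbb{R}^d$ that is compatible with $G$ and has profile $\boldsymbol\lambda$. If some vertex $i\in[k]$ has degree in $G$ strictly larger than $d-\lambda_i$, then there is no $k$-tuple $(p_1,\dots,p_k)$ with $p_j\in P_j$ for all $j$ whose points are pairwise at distance $1$; that is, $\psi_{k,d}(P_1,\dots,P_k)=0$.
   Context: A sphere of dimension $\ell$ in $\mathbb{R}^d$ ($0\le\ell\le d-1$) is the set of points of an $(\ell+1)$-dimensional affine subspace at a fixed positive distance from a fixed point of that subspace. For finite sets $P_1,\dots,P_k\subset\mathbb{R}^d$, the profile of $(P_1,\dots,P_k)$ is $\boldsymbol\lambda=(\lambda_1,\dots,\lambda_k)$, where $\lambda_i=0$ if $|P_i|\le 3$, and otherwise $\lambda_i$ is the smallest $\ell$ such that some sphere of dimension $\ell$ contains $P_i$, with $\lambda_i=d$ if no sphere contains $P_i$. A graph $G=([k],E)$ is compatible with $(P_1,\dots,P_k)$ if $\|p-p'\|=1$ for every edge $\{i,j\}\in E$ and all $p\in P_i$, $p'\in P_j$. $\psi_{k,d}(P_1,\dots,P_k)$ is the number of $k$-tuples $(p_1,\dots,p_k)$ with $p_i\in P_i$ whose points are pairwise at distance $1$. *)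

From HB Require Import structures.
From mathcomp Require Import all_boot all_order all_algebra.
From mathcomp Require Import finmap.
From mathcomp Require Import reals.
Set Implicit Arguments. Unset Strict Implicit. Unset Printing Implicit Defensive.
Import Order.TTheory GRing.Theory Num.Theory.
Local Open Scope ring_scope.
Local Open Scope fset_scope.

Section Defs.
Variables (R : realType) (d : nat).

Definition edist (x y : 'rV[R]_d) : R :=
  Num.sqrt (\sum_(j < d) (x 0 j - y 0 j) ^+ 2).

Definition on_sphere (c : 'rV[R]_d) (V : 'M[R]_d) (r : R) (x : 'rV[R]_d) : Prop :=
  (x - c <= V)%MS /\ edist x c = r.

(* Some sphere of dimension l (i.e. inside an (l+1)-dimensional affine
   subspace, positive radius, centre in the subspace) contains every point of P. *)
Definition on_sphere_of_dim (P : {fset 'rV[R]_d}) (l : nat) : Prop :=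
  exists (c : 'rV[R]_d) (V : 'M[R]_d) (r : R),
    [/\ \rank V = l.+1, 0 < r & forall p, p \in P -> on_sphere c V r p].

Definition is_profile_entry (P : {fset 'rV[R]_d}) (lam : nat) : Prop :=
  if (#|` P| <= 3)%N then lam = 0%N
  else ((lam < d)%N /\ on_sphere_of_dim P lam /\
          forall l, (l < lam)%N -> ~ on_sphere_of_dim P l)
       \/ (lam = d /\ forall l, (l < d)%N -> ~ on_sphere_of_dim P l).

Definition is_profile (k : nat) (P : 'I_k -> {fset 'rV[R]_d})
    (lam : 'I_k -> nat) : Prop :=
  forall i, is_profile_entry (P i) (lam i).

Definition simple_graph (k : nat) (G : rel 'I_k) : Prop :=
  symmetric G /\ irreflexive G.

Definition degree (k : nat) (G : rel 'I_k) (i : 'I_k) : nat :=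
  #|[set j | G i j]|.

Definition compatible (k : nat) (G : rel 'I_k) (P : 'I_k -> {fset 'rV[R]_d}) : Prop :=
  forall i j, G i j -> forall p q, p \in P i -> q \in P j -> edist p q = 1.

(* psi_{k,d}: number of k-tuples (p_1,...,p_k), p_i in P_i, pairwise at
   distance 1. A k-tuple is represented as a finite function from 'I_k to the
   finite set  U := union of the P_i  (every such tuple takes values in U). *)
Definition psi (k : nat) (P : 'I_k -> {fset 'rV[R]_d}) : nat :=
  let U := (\bigcup_(i <- enum 'I_k) P i)%fset in
  #|[set f : {ffun 'I_k -> U} |
      [forall i, val (f i) \in P i] &&
      [forall i, forall j, (i != j) ==> (edist (val (f i)) (val (f j)) == 1)]]|.

End Defs.

From HB Require Import structures.
From mathcomp Require Import all_boot all_order all_algebra.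
From mathcomp Require Import finmap.
From mathcomp Require Import reals.
From mathcomp Require Import ring zify.
Import Order.TTheory GRing.Theory Num.Theory.
Set Implicit Arguments. Unset Strict Implicit. Unset Printing Implicit Defensive.
Local Open Scope ring_scope.

(* Fix a witness tuple q and a vertex i of degree s.  The points q_j of the s
   neighbours j of i are pairwise at distance 1, so they span a regular simplex
   of dimension s - 1, and so does q_i together with them: hence s <= d.  Every
   point of P_i is at distance 1 from all these q_j, so P_i lies in the affine
   subspace through the circumcentre of the simplex orthogonal to it, on the
   sphere of dimension d - s centred there; its radius is positive because q_i
   is off the affine hull of the simplex.  Minimality of the profile entry then
   gives lam_i <= d - s, against s > d - lam_i. *)

Section Euclid.
Variables (R : realType) (d : nat).
Implicit Types x y z : 'rV[R]_d.

Definition sqdist x y : R := \sum_(j < d) (x 0 j - y 0 j) ^+ 2.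
Definition dot x y : R := (x *m y^T) 0 0.

Lemma edistE x y : edist x y = Num.sqrt (sqdist x y).
Proof. by []. Qed.

Lemma dotE x y : dot x y = \sum_(j < d) x 0 j * y 0 j.
Proof. by rewrite /dot mxE; apply: eq_bigr => j _; rewrite mxE. Qed.

Lemma sqdist_ge0 x y : 0 <= sqdist x y.
Proof. by apply: sumr_ge0 => j _; rewrite sqr_ge0. Qed.

Lemma edist1_sqdist x y : edist x y = 1 -> sqdist x y = 1.
Proof. by rewrite edistE => h; rewrite -(sqr_sqrtr (sqdist_ge0 x y)) h expr1n. Qed.

Lemma sqdistxx x : sqdist x x = 0.
Proof. by rewrite /sqdist big1 // => j _; rewrite subrr expr0n. Qed.

Lemma sqdistC x y : sqdist x y = sqdist y x.
Proof. by apply: eq_bigr => j _; rewrite -sqrrN opprB. Qed.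

Lemma sqdist_eq0 x y : sqdist x y = 0 -> x = y.
Proof.
move=> h; apply/rowP => j.
have := @psumr_eq0P _ _ _ _ (fun j _ => sqr_ge0 (x 0 j - y 0 j)) h j isT.
by move/eqP; rewrite sqrf_eq0 subr_eq0 => /eqP.
Qed.

Lemma dot_polar x y z : dot (x - z) (y - z) = (sqdist x z + sqdist y z - sqdist x y) / 2.
Proof.
rewrite dotE /sqdist -big_split -sumrB /= mulr_suml.
by apply: eq_bigr => j _; rewrite !mxE; field.
Qed.

Lemma sqdist_pythagoras x y z : dot (x - z) (y - z) = 0 ->
  sqdist x y = sqdist x z + sqdist y z.
Proof.
by rewrite dot_polar => /eqP; rewrite mulf_eq0 invr_eq0 pnatr_eq0 orbF subr_eq0 => /eqP.
Qed.

Lemma dot_mulmx_tr n x (M : 'M[R]_(n, d)) b : (x *m M^T) 0 b = dot x (row b M).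
Proof. by rewrite dotE !mxE; apply: eq_bigr => j _; rewrite !mxE. Qed.

Lemma gram_entry n (M : 'M[R]_(n, d)) a b : (M *m M^T) a b = dot (row a M) (row b M).
Proof. by rewrite dotE !mxE; apply: eq_bigr => j _; rewrite !mxE. Qed.

Lemma mxrank_gram_unit n (M : 'M[R]_(n, d)) : M *m M^T \in unitmx -> \rank M = n.
Proof.
move=> MMT_unit; apply/eqP; rewrite eqn_leq rank_leq_row /=.
by rewrite -{1}(mxrank_unit MMT_unit) mxrankM_maxl.
Qed.

End Euclid.

Lemma unitmx_simplex_gram (R : realType) n (Gm : 'M[R]_n) :
  (forall a b, Gm a b = (1 + (a == b)%:R) / 2) -> Gm \in unitmx.
Proof.
move=> GmE; rewrite -row_free_unit -kermx_eq0; apply/eqP.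
suff ker0 (y : 'rV[R]_n) : y *m Gm = 0 -> y = 0.
  apply/row_matrixP => r; rewrite row0; apply: ker0.
  by rewrite -row_mul mulmx_ker row0.
move=> yGm0.
have yE k : y 0 k = - \sum_a y 0 a.
  have := congr1 (fun M : 'rV[R]_n => M 0 k) yGm0; rewrite !mxE.
  have -> : \sum_a y 0 a * Gm a k = (\sum_a y 0 a + y 0 k) / 2.
    rewrite (bigD1 k) //= [in RHS](bigD1 k) //= GmE eqxx /=.
    have -> : \sum_(a | a != k) y 0 a * Gm a k = (\sum_(a | a != k) y 0 a) / 2.
      by rewrite mulr_suml; apply: eq_bigr => a /negbTE ak; rewrite GmE ak addr0 mul1r.
    by field.
  by move/eqP; rewrite mulf_eq0 invr_eq0 pnatr_eq0 orbF addrC addr_eq0 => /eqP.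
have sum0 : \sum_a y 0 a = 0.
  have sumE : \sum_a y 0 a = (- \sum_a y 0 a) *+ n.
    by rewrite [LHS](eq_bigr _ (fun k _ => yE k)) sumr_const card_ord.
  have /eqP : (\sum_a y 0 a) *+ n.+1 = 0 by rewrite mulrSr {2}sumE mulNrn addrN.
  by rewrite mulrn_eq0 /= => /eqP.
by apply/rowP => k; rewrite yE sum0 oppr0 mxE.
Qed.

Section AffineProjection.
Variables (R : realType) (d m : nat) (v : 'rV[R]_d) (W : 'M[R]_(m, d)).
Implicit Types x : 'rV[R]_d.

(* orthogonal projection of [x] onto the affine subspace [v + rowspace W] *)
Definition affine_proj x : 'rV[R]_d :=
  v + (x - v) *m W^T *m invmx (W *m W^T) *m W.

Lemma affine_proj_sub x : (affine_proj x - v <= W)%MS.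
Proof. by rewrite /affine_proj addrC addKr submxMl. Qed.

Hypothesis WWT_unit : W *m W^T \in unitmx.

Lemma affine_proj_ker x : (x - affine_proj x <= kermx W^T)%MS.
Proof.
rewrite sub_kermx /affine_proj opprD addrA mulmxBl.
by rewrite -[_ *m W *m W^T]mulmxA mulmxKV // subrr.
Qed.

Lemma sqdist_affine_proj x :
  sqdist x v = sqdist x (affine_proj x) + sqdist v (affine_proj x).
Proof.
apply: sqdist_pythagoras; have /sub_kermxP ker := affine_proj_ker x.
have [a aE] := submxP (affine_proj_sub x).
by rewrite -[v - _]opprB aE /dot linearN /= trmx_mul mulmxN mulmxA ker mul0mx oppr0 mxE.
Qed.

End AffineProjection.

Section UnitSimplex.
Variables (R : realType) (d : nat).
Implicit Types (v z : 'rV[R]_d) (n : nat).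

Definition unit_simplex n v (y : 'I_n -> 'rV[R]_d) : Prop :=
  (forall a, sqdist (y a) v = 1) /\ (forall a b, a != b -> sqdist (y a) (y b) = 1).

Definition unit_apex n v (y : 'I_n -> 'rV[R]_d) z : Prop :=
  sqdist z v = 1 /\ forall a, sqdist z (y a) = 1.

Definition edge_mx n v (y : 'I_n -> 'rV[R]_d) : 'M[R]_(n, d) := \matrix_a (y a - v).

Lemma unit_simplex_gram_unit n v y : @unit_simplex n v y ->
  edge_mx v y *m (edge_mx v y)^T \in unitmx.
Proof.
move=> [y_v y_y]; apply: unitmx_simplex_gram => a b.
rewrite gram_entry !rowK dot_polar !y_v.
by have [->|ab] := eqVneq a b; rewrite ?sqdistxx ?y_y //=; field.
Qed.

Lemma mxrank_unit_simplex n v y : @unit_simplex n v y -> \rank (edge_mx v y) = n.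
Proof. by move/unit_simplex_gram_unit/mxrank_gram_unit. Qed.

Lemma unit_apex_coords n v y z : @unit_simplex n v y -> unit_apex v y z ->
  (z - v) *m (edge_mx v y)^T = const_mx (1 / 2).
Proof.
move=> [y_v _] [z_v z_y]; apply/rowP => b.
by rewrite dot_mulmx_tr rowK dot_polar z_v y_v z_y !mxE; field.
Qed.

(* Adjoining the apex gives a unit simplex with one more vertex, whose edge
   matrix has full rank n + 1. *)
Lemma unit_apex_not_sub n v y z : @unit_simplex n v y -> unit_apex v y z ->
  ~~ (z - v <= edge_mx v y)%MS.
Proof.
move=> [y_v y_y] [z_v z_y]; apply/negP => z_sub.
pose yz (a : 'I_n.+1) := if unlift ord_max a is Some b then y b else z.
have yz_simplex : unit_simplex v yz.
  split=> [a|a b]; first by rewrite /yz; case: unliftP.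
  rewrite /yz; case: (unliftP ord_max a) => [a'|] ->;
    case: (unliftP ord_max b) => [b'|] ->.
  - by rewrite (inj_eq (@lift_inj _ ord_max)) => /y_y.
  - by rewrite sqdistC z_y.
  - by rewrite z_y.
  - by rewrite eqxx.
have : (edge_mx v yz <= edge_mx v y)%MS.
  apply/row_subP => a; rewrite rowK /yz; case: unliftP => [a'|] _ //.
  by rewrite -(rowK (fun a => y a - v) a') row_sub.
by move/mxrankS; rewrite !mxrank_unit_simplex // ltnn.
Qed.

Lemma unit_apex_lt_dim n v y z : @unit_simplex n v y -> unit_apex v y z -> (n < d)%N.
Proof.
move=> simplex apex.
rewrite -(mxrank_unit_simplex simplex) ltn_neqAle rank_leq_col andbT.
apply: contraNneq (unit_apex_not_sub simplex apex) => full.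
by apply: submx_full; rewrite /row_full full.
Qed.

End UnitSimplex.

(* Centre: the projection of any point of [X] onto the affine hull of the
   simplex, which is the same point for all of them. *)
Lemma unit_apexes_on_sphere (R : realType) d n (v : 'rV[R]_d) (y : 'I_n -> 'rV[R]_d)
    (X : {fset 'rV[R]_d}) x0 :
  unit_simplex v y -> x0 \in X -> (forall x, x \in X -> unit_apex v y x) ->
  on_sphere_of_dim X (d - n.+1).
Proof.
move=> simplex x0X apexX; pose W := edge_mx v y.
have WWT_unit : W *m W^T \in unitmx := unit_simplex_gram_unit simplex.
have coords x : x \in X -> (x - v) *m W^T = const_mx (1 / 2).
  by move=> xX; apply: unit_apex_coords simplex (apexX x xX).
pose c := affine_proj v W x0.
have cE x : x \in X -> affine_proj v W x = c by move=> xX; rewrite /c /affine_proj !coords.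
have sqdist_c x : x \in X -> sqdist x c = 1 - sqdist v c.
  move=> xX; have := sqdist_affine_proj v WWT_unit x.
  by rewrite cE // (apexX x xX).1 => ->; rewrite addrK.
have x0c : x0 != c.
  apply: contraNneq (unit_apex_not_sub simplex (apexX _ x0X)) => {1}->.
  exact: affine_proj_sub.
exists c, (kermx W^T), (edist x0 c); split.
- rewrite mxrank_ker mxrank_tr mxrank_unit_simplex //.
  by have := unit_apex_lt_dim simplex (apexX _ x0X); lia.
- rewrite edistE sqrtr_gt0 lt_def sqdist_ge0 andbT.
  by apply: contra x0c => /eqP/sqdist_eq0/eqP.
- move=> x xX; split; first by rewrite -(cE x xX) affine_proj_ker.
  by rewrite !edistE (sqdist_c x) ?(sqdist_c x0).
Qed.

Lemma on_sphere_of_dim_lt (R : realType) d (P : {fset 'rV[R]_d}) l :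
  on_sphere_of_dim P l -> (l < d)%N.
Proof. by move=> [c [V [r [<- _ _]]]]; apply: rank_leq_col. Qed.

Lemma profile_entry_le (R : realType) d (P : {fset 'rV[R]_d}) lam l :
  is_profile_entry P lam -> on_sphere_of_dim P l -> (lam <= l)%N.
Proof.
move=> + sph; rewrite /is_profile_entry; case: ifP => [_ -> //|_ [[_ [_ min]]|[_ min]]].
- by rewrite leqNgt; apply/negP => /min/(_ sph).
- by have /min := on_sphere_of_dim_lt sph.
Qed.

Lemma psi_eq0 (R : realType) d k (P : 'I_k -> {fset 'rV[R]_d}) :
  (forall q : 'I_k -> 'rV[R]_d, (forall j, q j \in P j) ->
     (forall a b, a != b -> sqdist (q a) (q b) = 1) -> False) ->
  psi P = 0%N.
Proof.
move=> no_tuple; apply/eqP; rewrite cards_eq0; apply/eqP/setP => f; rewrite !inE.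
apply/negbTE/negP => /andP[/forallP fP /forallP f_unit].
apply: (no_tuple (fun j => val (f j))) => // a b ab; apply: edist1_sqdist.
by move/forallP/(_ b)/implyP/(_ ab)/eqP: (f_unit a).
Qed.

Local Open Scope fset_scope.

Theorem lemma11p5 (R : realType) (d k : nat) (G : rel 'I_k)
    (P : 'I_k -> {fset 'rV[R]_d}) (lam : 'I_k -> nat) :
  simple_graph G ->
  compatible G P ->
  is_profile P lam ->
  (exists i : 'I_k, (d - lam i < degree G i)%N) ->
  psi P = 0%N.
Proof.
move=> _ compat prof [i deg_i]; apply: psi_eq0 => q qP q_unit.
set S := [set j | G i j].
have /card_gt0P [j0 j0S] : (0 < #|S|)%N by apply: leq_ltn_trans deg_i.
pose nb (a : 'I_#|S :\ j0|) : 'I_k := enum_val a.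
have nbS a : nb a \in S :\ j0 := enum_valP a.
have simplex : unit_simplex (q j0) (q \o nb).
  split=> [a|a b ab]; apply: q_unit; first by have := nbS a; rewrite in_setD1 => /andP[].
  by rewrite (inj_eq enum_val_inj).
have apex x : x \in P i -> unit_apex (q j0) (q \o nb) x.
  move=> xP; split=> [|a]; apply: edist1_sqdist; apply: compat xP (qP _).
  - by rewrite inE in j0S.
  - by have := nbS a; rewrite in_setD1 inE => /andP[].
have := profile_entry_le (prof i) (unit_apexes_on_sphere simplex (qP i) apex).
have := unit_apex_lt_dim simplex (apex _ (qP i)).
move: deg_i; rewrite /degree -/S (cardsD1 j0 S) j0S.
lia.
Qed.
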